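(* Let $f:[a,b]\to\mathbb F$ and $h:[a,b]\to\mathbb F$, $h(t)=f(t)\Delta g(t)$. Let \[D_1=\{t\in[a,b]\cap N_g^-: t\in (D_g\cap[a,t))'\},\quad D_2=\{t\in[a,b]\cap N_g^+: t\in (D_g\cap(t,b])'\},\] \[D_3=\{t\in[a,b]\setminus (N_g\cup D_g): t\in (D_g\cap[a,b])'\}.\] For $t\in[a,b]$: 1. If $t^*\in D_1\cup D_2\cup D_3$, then $h$ is $g$-differentiable at $t$ if and only if $\displaystyle\lim_{s\to t^*,\ s\in D_g}\frac{f(s)\Delta g(s)}{g(s)-g(t)}=0$, where the limit is the left-hand one if $t^*\in N_g^-$ and the right-hand one if $t^*\in N_g^+$. 2. If $t^*\in D_g\cap (D_g\cap(t,b])'$, then $h$ is $g$-differentiable at $t$ if and only if $\displaystyle\lim_{s\to t^{*+},\ s\in D_g}f(s)\Delta g(s)=0$. 3. In any other case, $h$ is $g$-differentiable at $t$. Moreover, if $h$ is $g$-differentiable at $t$, then $h'_g(t)=-f(t^* )\chi_{D_g}(t^* )$.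
   Context: Let $g:\mathbb R\to\mathbb R$ be nondecreasing and left-continuous, and $\mathbb F\in\{\mathbb R,\mathbb C\}$. $\Delta g(t)=g(t^+)-g(t)$, $D_g=\{t:\Delta g(t)>0\}$, $C_g=\{t: g\text{ constant on }(t-\varepsilon,t+\varepsilon)\text{ for some }\varepsilon>0\}=\bigcup_{n\in\Lambda}(a_n,b_n)$ (disjoint union of connected components), $N_g^-=\{a_n:n\in\Lambda\}\setminus D_g$, $N_g^+=\{b_n:n\in\Lambda\}\setminus D_g$, $N_g=N_g^-\cup N_g^+$. Fix $a<b$ with $a\notin N_g^-$, $b\notin D_g\cup C_g\cup N_g^+$. For $t\in[a,b]$, $t^*=t$ if $t\notin C_g$ and $t^*=b_n$ if $t\in(a_n,b_n)$. The $g$-derivative of $u:[a,b]\to\mathbb F$ at $t$ is $u'_g(t)=\lim_{s\to t}\frac{u(s)-u(t)}{g(s)-g(t)}$ if $t\notin D_g\cup C_g$ and $u'_g(t)=\lim_{s\to t^{*+}}\frac{u(s)-u(t^* )}{g(s)-g(t^* )}$ if $t\in D_g\cup C_g$, provided the finite limit exists ($u$ is then $g$-differentiable at $t$); limits are over $s\in[a,b]$ with nonzero denominator, and at points of $N_g^+\cup\{a\}$ only the right-hand limit, at points of $N_g^-\cup\{b\}$ only the left-hand limit is taken. $X'$ denotes the set of accumulation points of $X\subset\mathbb R$, and $\chi_{D_g}$ is the indicator function of $D_g$. *)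

(* R : realType, values in a normed R-module V
   (covers F = R and F = C). *)
From HB Require Import structures.
From mathcomp Require Import all_boot all_order all_algebra.
From mathcomp Require Import all_classical all_reals all_analysis.
Set Implicit Arguments. Unset Strict Implicit. Unset Printing Implicit Defensive.
Import Order.TTheory GRing.Theory Num.Theory.
Import numFieldNormedType.Exports.
Local Open Scope classical_set_scope.
Local Open Scope ring_scope.

Section GDefs.
Context {R : realType}.
Implicit Types (g : R -> R) (t s a b : R).

Definition gplus g t : R := lim (g x @[x --> t^'+]).

Definition Deltag g t : R := gplus g t - g t.

Definition Dg g : set R := [set t | 0 < Deltag g t].

Definition Cg g : set R :=
  [set t | exists2 e : R, 0 < e & forall s, t - e < s < t + e -> g s = g t].

(* left endpoints a_n of the connected components (a_n, b_n) of C_g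
   (finite ones): a ∉ C_g and (a, c) ⊆ C_g for some c > a *)
Definition Cg_left g : set R :=
  [set x | ~ Cg g x /\ exists2 c, x < c & forall s, x < s < c -> Cg g s].

(* right endpoints b_n of the components of C_g *)
Definition Cg_right g : set R :=
  [set x | ~ Cg g x /\ exists2 c, c < x & forall s, c < s < x -> Cg g s].

Definition Ngm g : set R := Cg_left g `\` Dg g.
Definition Ngp g : set R := Cg_right g `\` Dg g.
Definition Ng g : set R := Ngm g `|` Ngp g.

(* t^* : t itself if t ∉ C_g, and the right endpoint b_n of the component
   (a_n, b_n) of C_g containing t otherwise. *)
Definition tstar g t : R :=
  if pselect (Cg g t) then inf [set s | t < s /\ ~ Cg g s] else t.

Definition acc (X : set R) : set R :=
  [set t | forall e : R, 0 < e -> exists s, [/\ s != t, X s & `|s - t| < e]].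

Definition Icc a b : set R := [set s | a <= s <= b].

Section GDeriv.
Context {V : normedModType R}.

Definition gquot g (u : R -> V) t0 s : V := (g s - g t0)^-1 *: (u s - u t0).

Definition gdom g a b t : set R :=
  [set s | [/\ a <= s <= b, s != t, g s != g t,
             (Ngp g t \/ t = a) -> t < s &
             (Ngm g t \/ t = b) -> s < t]].

Definition gderiv_to g a b (u : R -> V) t (l : V) : Prop :=
  ((Dg g t \/ Cg g t) ->
     gquot g u (tstar g t) s @[s --> within
        [set s | [/\ a <= s <= b, tstar g t < s & g s != g (tstar g t)]]
        (nbhs (tstar g t))] --> l) /\
  (~ (Dg g t \/ Cg g t) ->
     gquot g u t s @[s --> within (gdom g a b t) (nbhs t)] --> l).

Definition gdifferentiable g a b (u : R -> V) t : Prop :=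
  exists l, gderiv_to g a b u t l.

End GDeriv.

Definition D1 g a b : set R :=
  [set t | [/\ a <= t <= b, Ngm g t & acc (Dg g `&` [set s | a <= s < t]) t]].
Definition D2 g a b : set R :=
  [set t | [/\ a <= t <= b, Ngp g t & acc (Dg g `&` [set s | t < s <= b]) t]].
Definition D3 g a b : set R :=
  [set t | [/\ a <= t <= b, ~ Ng g t, ~ Dg g t & acc (Dg g `&` Icc a b) t]].

End GDefs.

From HB Require Import structures.
From mathcomp Require Import all_boot all_order all_algebra.
From mathcomp Require Import all_classical all_reals all_analysis.
From mathcomp Require Import lra.
Import Order.TTheory GRing.Theory Num.Theory.
Import numFieldNormedType.Exports.
Local Open Scope classical_set_scope.
Local Open Scope ring_scope.

(* Off [D_g] the function [h = Δg *: f] vanishes, and since [D_g] is countable,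
   points of continuity of [g] accumulate at [t^*] inside the domain of the
   g-difference quotient of [h] at [t]. Along them the quotient is [- h t^*]
   divided by [g s - g t^*], whose limit is [0] if [t^*] is not a jump point and
   [- f t^*] if it is (the denominator then tends to [Δg t^*]); this pins down
   the g-derivative. Its existence is therefore equivalent to the quotient (at a
   jump point, [h] itself) tending to [0] along [D_g], which holds vacuously when
   [D_g] does not accumulate at [t^*] from the admissible side. *)

Set Implicit Arguments. Unset Strict Implicit. Unset Printing Implicit Defensive.

Section MonotoneLeftContinuous.
Context {R : realType} (g : R -> R).
Hypotheses (g_nd : {homo g : x y / x <= y})
  (g_lc : forall t, g x @[x --> t^'-] --> g t).

Let gplus_inf t : g x @[x --> t^'+] --> inf [set g x | x in [set` `]t, +oo[]].
Proof.
apply: nondecreasing_at_right_cvgr => [//| x y _ _ |]; first exact: g_nd.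
exists (g t) => _ [s /= + <-]; rewrite in_itv /= andbT => /ltW; exact: g_nd.
Qed.

Lemma gplus_cvg t : g x @[x --> t^'+] --> gplus g t.
Proof. by rewrite /gplus (cvg_lim _ (@gplus_inf t)) //; exact: @gplus_inf t. Qed.

Lemma gplus_ge t : g t <= gplus g t.
Proof.
apply: (limr_ge (@gplus_cvg t)); near=> s; apply: g_nd.
by apply: ltW; near: s; exact: nbhs_right_gt.
Unshelve. all: by end_near.
Qed.

Lemma gplus_le t s : t < s -> gplus g t <= g s.
Proof.
move=> ts; apply: (limr_le (@gplus_cvg t)); near=> r; apply: g_nd.
by apply: ltW; near: r; exact: nbhs_right_lt.
Unshelve. all: by end_near.
Qed.

Lemma Deltag_eq0 t : ~ Dg g t -> Deltag g t = 0.
Proof.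
move=> /negP; rewrite -leNgt => Dle0.
by apply/eqP; rewrite eq_le Dle0 subr_ge0 gplus_ge.
Qed.

Lemma Cg_of_const x y c : (forall q, x < q < y -> g q = c) ->
  forall r, x < r < y -> Cg g r.
Proof.
move=> gc r /andP[xr ry]; exists (Num.min (r - x) (y - r)).
  by rewrite lt_min !subr_gt0 xr ry.
have [m1 m2] : Num.min (r - x) (y - r) <= r - x /\ Num.min (r - x) (y - r) <= y - r.
  by rewrite !ge_min !lexx orbT.
by move=> q /andP[? ?]; rewrite !gc //; apply/andP; split; lra.
Qed.

Lemma Cg_open t : Cg g t ->
  exists2 e : R, 0 < e & forall s, t - e < s < t + e -> Cg g s.
Proof. by move=> [e e0 gc]; exists e => //; exact: Cg_of_const gc. Qed.

Lemma Cg_nDg t : Cg g t -> ~ Dg g t.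
Proof.
move=> [e e0 gc]; suff gplus_t : gplus g t = g t by rewrite /Dg /Deltag /= gplus_t subrr ltxx.
rewrite /gplus; apply: cvg_lim => //; apply: cvg_near_cst.
near=> s; apply: gc; apply/andP; split.
  by apply: lt_trans (_ : t < s); [lra | near: s; exact: nbhs_right_gt].
by near: s; apply: nbhs_right_lt; lra.
Unshelve. all: by end_near.
Qed.

(* If [g] rose on [[p, q]], the infimum of the points where it exceeds [g p]
   would lie in [C_g] and still be approached by such points. *)
Lemma Cg_const x y : (forall s, x < s < y -> Cg g s) ->
  forall p q, x < p -> p <= q -> q < y -> g q = g p.
Proof.
move=> Cxy p q xp pq qy; apply/eqP; rewrite eq_le (g_nd pq) andbT leNgt.
apply/negP => gpq; pose E := [set r | p <= r <= q /\ g p < g r].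
have Eq : E q by rewrite /E /= pq lexx.
have Elb : has_lbound E by exists p => r [/andP[]].
have infE : has_inf E by split => //; exists q.
have pu : p <= inf E by apply: lb_le_inf => [|r [/andP[]]]; first exists q.
have uq : inf E <= q by exact: ge_inf.
have [e e0 gc] : Cg g (inf E) by apply: Cxy; apply/andP; split; lra.
have [r Er ru] := inf_adherent e0 infE.
have ur : inf E <= r by exact: ge_inf.
have gu : g (inf E) <= g p.
  case: (eqVneq p (inf E)) => [<-//|pnu].
  have pu' : p < inf E by rewrite lt_neqAle pnu.
  pose l := Num.max p (inf E - e / 2).
  have lu : l < inf E by rewrite gt_max pu' /=; lra.
  have pl : p <= l by rewrite le_max lexx.
  have le_l : inf E - e / 2 <= l by rewrite le_max lexx orbT.
  rewrite -(gc l); last by apply/andP; split; lra.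
  rewrite leNgt; apply/negP => gpl.
  have := ge_inf Elb (conj _ gpl); rewrite pl /=; lra.
case: Er => _; rewrite (gc r); last by apply/andP; split; lra.
by rewrite ltNge gu.
Qed.

Lemma Cg_itv_right_end x y : (forall s, x < s < y -> Cg g s) ->
  forall q, x < q < y -> g y = g q.
Proof.
move=> Cxy q /andP[xq qy]; rewrite -(cvg_lim _ (@g_lc y)) //.
apply: cvg_lim => //; apply: cvg_near_cst; near=> z.
have qz : q <= z by apply: ltW; near: z; exact: nbhs_left_gt.
have zy : z < y by near: z; exact: nbhs_left_lt.
exact: (Cg_const Cxy xq qz zy).
Unshelve. all: by end_near.
Qed.

Lemma Cg_itv_left_end x y : (forall s, x < s < y -> Cg g s) ->
  forall q, x < q < y -> gplus g x = g q.
Proof.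
move=> Cxy q /andP[xq qy]; rewrite /gplus; apply: cvg_lim => //.
apply: cvg_near_cst; near=> z.
have xz : x < z by near: z; exact: nbhs_right_gt.
have zq : z <= q by near: z; exact: nbhs_right_le.
exact/esym/(Cg_const Cxy xz zq qy).
Unshelve. all: by end_near.
Qed.

Lemma Ngm_nNgp t : Ngm g t -> ~ Ngp g t.
Proof.
move=> [[nCt [c tc Ctc]] nDt] [[_ [c' c't Cc't]] _]; apply: nCt.
have gplus_t : gplus g t = g t.
  by apply/eqP; rewrite -subr_eq0; apply/eqP; exact: Deltag_eq0.
apply: (@Cg_of_const c' c (g t)); last by rewrite c't tc.
move=> q /andP[c'q qc]; case: (ltgtP q t) => [qt|tq|-> //].
  by rewrite (Cg_itv_right_end Cc't (q := q)) // c'q.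
by rewrite -gplus_t (Cg_itv_left_end Ctc (q := q)) // tq.
Qed.

Lemma tstar_Cg t b : Cg g t -> ~ Cg g b -> t <= b ->
  [/\ t < tstar g t <= b, ~ Cg g (tstar g t),
      (forall s, t < s < tstar g t -> Cg g s) & g (tstar g t) = g t].
Proof.
move=> Ct nCb tb; pose E := [set s | t < s /\ ~ Cg g s].
have tb' : t < b by rewrite lt_neqAle tb andbT; apply: contra_notN nCb => /eqP <-.
have Elb : has_lbound E by exists t => s [/ltW].
have infE : has_inf E by split; first exists b.
have -> : tstar g t = inf E by rewrite /tstar; case: pselect.
have [e e0 Cte] := Cg_open Ct.
have te : t + e <= inf E.
  apply: lb_le_inf => [|r [tr nCr]]; first by exists b.
  by rewrite leNgt; apply/negP => re; apply: nCr; apply: Cte; apply/andP; split; lra.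
have Cin s : t < s < inf E -> Cg g s.
  move=> /andP[ts su]; apply: contrapT => nCs.
  by have := ge_inf Elb (conj ts nCs); lra.
have nCu : ~ Cg g (inf E).
  move=> /Cg_open [e' e'0 Cue']; have [r [tr nCr] ru] := inf_adherent e'0 infE.
  have ur : inf E <= r by apply: ge_inf.
  by apply: nCr; apply: Cue'; apply/andP; split; lra.
split => //; first by apply/andP; split; [lra | by apply: ge_inf].
apply: (@Cg_itv_right_end (t - e)); last by apply/andP; split; lra.
move=> s /andP[s1 s2]; case: (ltP t s) => ts; first by apply: Cin; rewrite ts.
by apply: Cte; apply/andP; split; lra.
Qed.

Lemma Cg_between x y : g y = g x -> forall r, x < r < y -> Cg g r.
Proof.
move=> gyx; apply: (Cg_of_const (c := g x)) => q /andP[/ltW xq /ltW qy].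
by apply/eqP; rewrite eq_le -{1}gyx !g_nd.
Qed.

Lemma lt_g_right p s : p < s -> ~ Cg g p -> ~ Ngm g p -> g p < g s.
Proof.
move=> ps nCp nNp; have [Dp|nDp] := pselect (Dg g p).
  by apply: lt_le_trans (gplus_le ps); rewrite -subr_gt0.
rewrite lt_neqAle g_nd ?(ltW ps) // andbT; apply/eqP => gps.
by apply: nNp; split => //; split => //; exists s => //; exact: Cg_between.
Qed.

Lemma lt_g_left p s : s < p -> ~ Cg g p -> ~ Dg g p -> ~ Ngp g p -> g s < g p.
Proof.
move=> sp nCp nDp nNp; rewrite lt_neqAle g_nd ?(ltW sp) // andbT.
by apply/eqP => gsp; apply: nNp; split => //; split => //; exists s => //; exact: Cg_between.
Qed.

(* [D_g] consists of discontinuities of the monotone [g], hence is countable. *)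
Lemma exists_nDg x y : x < y -> exists2 s, x < s < y & ~ Dg g s.
Proof.
move=> xy; apply: contrapT => allD.
have Dxy s : x < s < y -> Dg g s.
  by move=> xsy; apply: contrapT => nDs; apply: allD; exists s.
have sub : [set` `]x, y[] `<=` [set z | (z \in `]x, y[) /\ discontinuity g z].
  move=> s /= xsy; split => //; have /Dxy Ds : x < s < y by move: xsy; rewrite in_itv.
  split.
  - by apply/cvg_ex; exists (g s); exact: g_lc.
  - by apply/cvg_ex; exists (gplus g s); exact: gplus_cvg.
  rewrite (cvg_lim _ (@g_lc s)) // (cvg_lim _ (@gplus_cvg s)) //.
  by apply: contraPneq Ds => gs_eq; rewrite /Dg /Deltag /= -gs_eq subrr ltxx.
have cD := @discontinuity_countable R x y g (fun u v _ _ => @g_nd u v).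
have := countable_lebesgue_measure0 (sub_countable (subset_card_le sub) cD).
rewrite lebesgue_measure_itv /= lte_fin xy /= => /eqP.
by rewrite -EFinD eqe subr_eq0 => /eqP yx; move: xy; rewrite yx ltxx.
Qed.

Lemma acc_setD_Dg_right p c (A : set R) : p < c ->
  [set s | p < s < c] `<=` A -> acc (A `\` Dg g) p.
Proof.
move=> pc sub e e0.
have pm : p < Num.min c (p + e) by rewrite lt_min pc /=; lra.
have [s /andP[ps]] := exists_nDg pm.
rewrite lt_min => /andP[sc spe] nDs; exists s; split; first by rewrite gt_eqF.
  by split => //; apply: sub => /=; rewrite ps.
by rewrite gtr0_norm; lra.
Qed.

Lemma acc_setD_Dg_left c p (A : set R) : c < p ->
  [set s | c < s < p] `<=` A -> acc (A `\` Dg g) p.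
Proof.
move=> cp sub e e0.
have mp : Num.max c (p - e) < p by rewrite gt_max cp /=; lra.
have [s /andP[+ sp] nDs] := exists_nDg mp.
rewrite gt_max => /andP[cs pes]; exists s; split; first by rewrite lt_eqF.
  by split => //; apply: sub => /=; rewrite cs.
by rewrite ltr0_norm; lra.
Qed.
End MonotoneLeftContinuous.

Section WithinLimits.
Context {R : realType} {V : normedModType R}.

Lemma sub_acc (A B : set R) p : A `<=` B -> acc A p -> acc B p.
Proof. by move=> AB Ap e /Ap[s [sp /AB Bs spe]]; exists s. Qed.

Lemma acc_within_proper (A : set R) p : acc A p -> ProperFilter (within A (nbhs p)).
Proof.
move=> Ap; apply: within_nbhs_proper; apply: subset_limit_point.
move=> U /nbhs_ballP[e /= e0 peU]; have [s [sp As spe]] := Ap e e0.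
by exists s; split => //; apply: peU; rewrite -ball_normE /= distrC.
Qed.

(* The filter [within A (nbhs p)] is degenerate: it contains [set0]. *)
Lemma cvg_within_nacc (A : set R) p (f : R -> V) (l : V) :
  ~ A p -> ~ acc A p -> f @ within A (nbhs p) --> l.
Proof.
move=> nAp nacc U _; apply/nbhs_ballP.
have [e e0 farA] : exists2 e : R, 0 < e & forall s, A s -> e <= `|s - p|.
  apply: contrapT => near_p; apply: nacc => e e0; apply: contrapT => far.
  apply: near_p; exists e => // s As; rewrite leNgt; apply/negP => spe.
  by apply: far; exists s; split => //; apply: contra_not_neq nAp => <-.
exists e => // s /= + As; rewrite -ball_normE /= distrC => spe.
by have := farA s As; rewrite leNgt spe.
Qed.

Lemma cvg_within_vanishP {T : topologicalType} (F : set_system T) {FF : Filter F}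
    (S P : set T) (Q : T -> V) :
  (forall s, S s -> ~ P s -> Q s = 0) ->
  Q @ within S F --> 0 <-> Q @ within (S `&` P) F --> 0.
Proof.
move=> Q0; split => [QS|QSP U U0].
  exact: cvg_trans (cvg_app _ (within_subset _ (@subIsetl _ S P))) QS.
have QU : F (fun s => (S `&` P) s -> U (Q s)) := QSP U U0.
suff : F (fun s => S s -> U (Q s)) by [].
apply: filterS QU => s QU Ss; have [Ps|nPs] := pselect (P s); first exact: QU.
by rewrite Q0 //; exact: nbhs_singleton U0.
Qed.

Lemma cvg_within_vanish_eq0 (S P : set R) p (Q : R -> V) (L : V) :
  acc (S `\` P) p -> (forall s, S s -> ~ P s -> Q s = 0) ->
  Q @ within S (nbhs p) --> L -> L = 0.
Proof.
move=> accSP Q0 QL; have PF := fmap_proper_filter Q (acc_within_proper accSP).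
apply: (@cvg_unique _ (@norm_hausdorff _ V) _ PF).
  exact: cvg_trans (cvg_app _ (within_subset _ (@subDsetl _ S P))) QL.
apply: cvg_trans (fmap_within_eq (g := cst 0) _ _) (cvg_cst _).
by move=> s /set_mem[Ss nPs]; exact: Q0.
Qed.

Lemma cvg_scale_inv_subP {T} (F : set_system T) {FF : Filter F}
    (phi : T -> R) (d : R) (u : T -> V) (c L : V) :
  d != 0 -> phi @ F --> d ->
  (phi x)^-1 *: (u x - c) @[x --> F] --> L <-> u @ F --> c + d *: L.
Proof.
move=> d0 phid; split => [qL|uc].
  rewrite addrC; apply: cvg_trans (cvgD (cvgZ phid qL) (cvg_cst c)).
  apply: near_eq_cvg; near=> x.
  rewrite !fctE scalerA mulfV ?scale1r ?subrK //; near: x.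
  exact: cvgr_neq0 phid d0.
have := cvgZ (cvgV d0 phid) (cvgB uc (cvg_cst c)).
by rewrite [c + _]addrC addrK scalerA mulVf // scale1r; apply.
Unshelve. all: by end_near.
Qed.
End WithinLimits.

Section GQuotient.
Context {R : realType} {V : normedModType R} (g : R -> R) (a b : R).

Lemma tstar_id t : ~ Cg g t -> tstar g t = t.
Proof. by rewrite /tstar; case: pselect. Qed.

Definition gquot_dom t : set R :=
  if pselect (Dg g t \/ Cg g t) then
    [set s | [/\ a <= s <= b, tstar g t < s & g s != g (tstar g t)]]
  else gdom g a b t.

Lemma gderiv_toE (u : R -> V) t l : gderiv_to g a b u t l <->
  gquot g u (tstar g t) @ within (gquot_dom t) (nbhs (tstar g t)) --> l.
Proof.
rewrite /gderiv_to /gquot_dom; case: pselect => DCt.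
  by split => [[/(_ DCt)]|ul]; last by split.
rewrite tstar_id; last by move=> Ct; apply: DCt; right.
by split => [[_ /(_ DCt)]|ul]; last by split.
Qed.

Lemma D123_of_acc p : a <= p <= b -> ~ Dg g p ->
  acc [set s | [/\ a <= s <= b, Dg g s & (Ngm g p -> s < p) /\ (Ngp g p -> p < s)]] p ->
  (D1 g a b `|` D2 g a b `|` D3 g a b) p.
Proof.
move=> pab nDp Ap; have [Nmp|nNmp] := pselect (Ngm g p).
  left; left; split => //; apply: sub_acc Ap => s [/andP[a_s _] Ds [/(_ Nmp) sp _]].
  by split => //=; rewrite a_s sp.
have [Npp|nNpp] := pselect (Ngp g p).
  left; right; split => //; apply: sub_acc Ap => s [/andP[_ sb] Ds [_ /(_ Npp) ps]].
  by split => //=; rewrite ps sb.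
by right; split => //; [case | apply: sub_acc Ap => s []].
Qed.
End GQuotient.

Section GDerivativeOfJumps.
Context {R : realType} {V : normedModType R} (g : R -> R) (a b : R) (f : R -> V).
Hypotheses (g_nd : {homo g : x y / x <= y})
  (g_lc : forall t, g x @[x --> t^'-] --> g t)
  (ab : a < b) (Ha : ~ Ngm g a) (Hb : ~ (Dg g b \/ Cg g b \/ Ngp g b)).
Variable t : R.
Hypothesis Ht : a <= t <= b.

Local Notation ts := (tstar g t).
Local Notation h := (fun s => Deltag g s *: f s).

Let nCb : ~ Cg g b. Proof. by move=> Cb; apply: Hb; right; left. Qed.
Let tb : t <= b. Proof. by case/andP: Ht. Qed.

Lemma tstar_ge : t <= ts.
Proof.
have [Ct|nCt] := pselect (Cg g t); last by rewrite tstar_id.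
by have [/andP[/ltW]] := tstar_Cg g_nd g_lc Ct nCb tb.
Qed.

Lemma tstar_le : ts <= b.
Proof.
have [Ct|nCt] := pselect (Cg g t); last by rewrite tstar_id.
by have [/andP[_]] := tstar_Cg g_nd g_lc Ct nCb tb.
Qed.

Lemma tstar_nCg : ~ Cg g ts.
Proof.
have [Ct|nCt] := pselect (Cg g t); last by rewrite tstar_id.
by have [] := tstar_Cg g_nd g_lc Ct nCb tb.
Qed.

Lemma g_tstar : g ts = g t.
Proof.
have [Ct|nCt] := pselect (Cg g t); last by rewrite tstar_id.
by have [] := tstar_Cg g_nd g_lc Ct nCb tb.
Qed.

Lemma tstar_Dg_or_Ngp : Dg g t \/ Cg g t -> Dg g ts \/ Ngp g ts.
Proof.
case=> [Dt|Ct]; first by left; rewrite tstar_id // => /Cg_nDg /(_ Dt).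
have [Dts|nDts] := pselect (Dg g ts); [by left | right].
have [/andP[tts _] nCts Cin _] := tstar_Cg g_nd g_lc Ct nCb tb.
by split => //; split => //; exists t.
Qed.

Lemma tstar_nNgm : Dg g t \/ Cg g t -> ~ Ngm g ts.
Proof. by move=> /tstar_Dg_or_Ngp[Dts [_ //]|/[swap] /(Ngm_nNgp g_nd g_lc)]; apply. Qed.

Lemma tstar_lt_b : Dg g t \/ Cg g t -> ts < b.
Proof.
move=> /tstar_Dg_or_Ngp DNts; rewrite lt_neqAle tstar_le andbT.
by apply/eqP => tsb; apply: Hb; rewrite -tsb; case: DNts; [left | right; right].
Qed.

Lemma gquot_domE : Dg g t \/ Cg g t ->
  gquot_dom g a b t = [set s | [/\ a <= s <= b, ts < s & g s != g ts]].
Proof. by rewrite /gquot_dom; case: pselect. Qed.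

Lemma gdom_left : ~ Dg g t -> ~ Cg g t -> ~ Ngp g t ->
  [set s | a < s < t] `<=` gdom g a b t.
Proof.
move=> nDt nCt nNpt s /andP[a_s st]; split; last by [].
- by rewrite (ltW a_s) (le_trans (ltW st)).
- by rewrite lt_eqF.
- by rewrite lt_eqF // (lt_g_left g_nd).
- by case=> [//|ta]; move: a_s; rewrite -ta ltNge (ltW st).
Qed.

Lemma gdom_right : ~ Cg g t -> ~ Ngm g t -> [set s | t < s < b] `<=` gdom g a b t.
Proof.
move=> nCt nNmt s /andP[ts sb]; split => //.
- by rewrite (ltW sb) (le_trans _ (ltW ts)) //; case/andP: Ht.
- by rewrite gt_eqF.
- by rewrite gt_eqF // (lt_g_right g_nd).
- by case=> [//|tb']; move: sb; rewrite -tb' ltNge (ltW ts).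
Qed.

Lemma acc_gquot_dom : acc (gquot_dom g a b t `\` Dg g) ts.
Proof.
have [DCt|nDCt] := pselect (Dg g t \/ Cg g t).
  rewrite gquot_domE //; apply: (acc_setD_Dg_right g_nd g_lc (tstar_lt_b DCt)).
  move=> s /andP[tss sb]; split => //.
    have a_ts : a <= ts by rewrite (le_trans _ tstar_ge) //; case/andP: Ht.
    by rewrite (ltW sb) (le_trans a_ts (ltW tss)).
  by rewrite gt_eqF // (lt_g_right g_nd tss tstar_nCg (tstar_nNgm DCt)).
have nDt : ~ Dg g t by move=> Dt; apply: nDCt; left.
have nCt : ~ Cg g t by move=> Ct; apply: nDCt; right.
have -> : gquot_dom g a b t = gdom g a b t by rewrite /gquot_dom; case: pselect.
rewrite tstar_id //.
have [Nmt|nNmt] := pselect (Ngm g t).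
  have a_t : a < t.
    by rewrite lt_neqAle; case/andP: Ht => -> _; rewrite andbT; apply: contra_not_neq Ha => ->.
  by apply: (acc_setD_Dg_left g_nd g_lc) a_t (gdom_left nDt nCt (Ngm_nNgp g_nd g_lc Nmt)).
have [tb'|bt] := ltP t b.
  exact: (acc_setD_Dg_right g_nd g_lc) tb' (gdom_right nCt nNmt).
have tE : t = b by apply/eqP; rewrite eq_le tb bt.
apply: (acc_setD_Dg_left g_nd g_lc) (_ : a < t) (gdom_left nDt nCt _); first by rewrite tE.
by rewrite tE => Npb; apply: Hb; right; right.
Qed.

Lemma DC_of_Dg_tstar : Dg g ts -> Dg g t \/ Cg g t.
Proof.
have [Ct|nCt] := pselect (Cg g t); first by right.
by left; rewrite -(tstar_id nCt).
Qed.

Lemma gquot_dom_Dg_jump : Dg g ts ->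
  gquot_dom g a b t `&` Dg g = [set s | [/\ a <= s <= b, Dg g s & ts < s]].
Proof.
move=> Dts; have DCt := DC_of_Dg_tstar Dts.
rewrite gquot_domE //; apply/seteqP; split => s; first by move=> [[? ? _] ?].
move=> [sab Ds tss]; split => //; split => //.
by rewrite gt_eqF // (lt_g_right g_nd tss tstar_nCg (tstar_nNgm DCt)).
Qed.

Lemma gquot_dom_Dg_nojump : ~ Dg g ts ->
  gquot_dom g a b t `&` Dg g = [set s | [/\ a <= s <= b, Dg g s, s != ts,
    g s != g t & (Ngm g ts -> s < ts) /\ (Ngp g ts -> ts < s)]].
Proof.
move=> nDts; have [DCt|nDCt] := pselect (Dg g t \/ Cg g t).
  have Npts : Ngp g ts by case: (tstar_Dg_or_Ngp DCt).
  rewrite gquot_domE // -g_tstar; apply/seteqP; split => s.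
    move=> [[sab tss gs] Ds]; split => //; first by rewrite gt_eqF.
    by split => // Nmts; exfalso; exact: tstar_nNgm DCt Nmts.
  by move=> [sab Ds _ gs [_ /(_ Npts) tss]].
have nCt : ~ Cg g t by move=> Ct; apply: nDCt; right.
have -> : gquot_dom g a b t = gdom g a b t by rewrite /gquot_dom; case: pselect.
rewrite tstar_id //; apply/seteqP; split => s.
  by move=> [[sab st gs ta tb'] Ds]; split => //; split => N; [apply: tb' | apply: ta]; left.
move=> [/[dup] sab /andP[a_s sb] Ds st gs [Nm Np]]; split => //; split => //.
  by case=> [/Np //|ta]; rewrite lt_neqAle eq_sym st ta a_s.
by case=> [/Nm //|tb']; rewrite lt_neqAle st tb' sb.
Qed.

Lemma gderiv_jump : Dg g ts ->
  (forall l, gderiv_to g a b h t l -> l = - f ts) /\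
  (gdifferentiable g a b h t <->
     h @ within [set s | [/\ a <= s <= b, Dg g s & ts < s]] (nbhs ts) --> 0).
Proof.
move=> Dts; have DCt := DC_of_Dg_tstar Dts.
have SDg := gquot_dom_Dg_jump Dts; have accS := acc_gquot_dom.
rewrite gquot_domE // in SDg accS.
set S := [set s | [/\ a <= s <= b, ts < s & g s != g ts]] in SDg accS.
have Delta0 : Deltag g ts != 0 by rewrite gt_eqF.
have g_cvg : (fun s => g s - g ts) @ within S (nbhs ts) --> Deltag g ts.
  apply: cvgB (cvg_cst _); apply: cvg_trans (gplus_cvg g_nd (t := ts)).
  by apply: cvg_app; apply: within_subset => s [].
have quotP l : gderiv_to g a b h t l <->
    h @ within S (nbhs ts) --> h ts + Deltag g ts *: l.
  by rewrite gderiv_toE gquot_domE //; exact: cvg_scale_inv_subP Delta0 g_cvg.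
have h0 s : S s -> ~ Dg g s -> h s = 0 by move=> _ /(Deltag_eq0 g_nd) ->; rewrite scale0r.
have lim0 L : h @ within S (nbhs ts) --> L -> L = 0 := cvg_within_vanish_eq0 accS h0.
have limE l : h ts + Deltag g ts *: l = 0 <-> l = - f ts.
  split => [|->]; last by rewrite scalerN subrr.
  by move/eqP; rewrite -scalerDr scaler_eq0 (negbTE Delta0) addrC addr_eq0 => /eqP.
split => [l /quotP /lim0 /limE //|]; split => [[l /quotP hl]|hT].
  have hS0 : h @ within S (nbhs ts) --> 0 by rewrite -(lim0 _ hl).
  by move/(cvg_within_vanishP h0): hS0; rewrite SDg.
exists (- f ts); apply/quotP; rewrite (proj2 (limE _) erefl).
by apply/(cvg_within_vanishP h0); rewrite SDg.
Qed.

Lemma gderiv_nojump : ~ Dg g ts ->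
  (forall l, gderiv_to g a b h t l -> l = 0) /\
  (gdifferentiable g a b h t <->
     (g s - g t)^-1 *: (Deltag g s *: f s) @[s --> within
        [set s | [/\ a <= s <= b, Dg g s, s != ts, g s != g t &
                   (Ngm g ts -> s < ts) /\ (Ngp g ts -> ts < s)]] (nbhs ts)] --> 0).
Proof.
move=> nDts; rewrite -gquot_dom_Dg_nojump //.
have quotE : gquot g h ts = fun s => (g s - g t)^-1 *: h s.
  by apply/funext => s; rewrite /gquot g_tstar (Deltag_eq0 g_nd nDts) scale0r subr0.
have Q0 s : gquot_dom g a b t s -> ~ Dg g s -> (g s - g t)^-1 *: h s = 0.
  by move=> _ /(Deltag_eq0 g_nd) ->; rewrite scale0r scaler0.
have lim0 l : gderiv_to g a b h t l -> l = 0.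
  by rewrite gderiv_toE quotE; exact: cvg_within_vanish_eq0 acc_gquot_dom Q0.
split => //; rewrite -cvg_within_vanishP //; split => [[l hl]|Q_cvg].
  by move: (hl); rewrite gderiv_toE quotE (lim0 _ hl).
by exists 0; rewrite gderiv_toE quotE.
Qed.
End GDerivativeOfJumps.

Theorem proposition3p4 (R : realType) (V : normedModType R)
  (g : R -> R) (a b : R) (f : R -> V)
  (g_nd : {homo g : x y / x <= y})
  (g_lc : forall t, g x @[x --> t^'-] --> g t)
  (ab : a < b)
  (Ha : ~ Ngm g a)
  (Hb : ~ (Dg g b \/ Cg g b \/ Ngp g b))
  (t : R) (Ht : a <= t <= b) :
  let h := fun s => Deltag g s *: f s in
  let ts := tstar g t in
  (* 1 *)
  ((D1 g a b `|` D2 g a b `|` D3 g a b) ts ->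
     (gdifferentiable g a b h t <->
       (g s - g t)^-1 *: (Deltag g s *: f s) @[s --> within
          [set s | [/\ a <= s <= b, Dg g s, s != ts, g s != g t &
                     (Ngm g ts -> s < ts) /\ (Ngp g ts -> ts < s)]]
          (nbhs ts)] --> (0 : V))) /\
  (* 2 *)
  ((Dg g ts /\ acc (Dg g `&` [set s | t < s <= b]) ts) ->
     (gdifferentiable g a b h t <->
       Deltag g s *: f s @[s --> within
          [set s | [/\ a <= s <= b, Dg g s & ts < s]] (nbhs ts)] --> (0 : V))) /\
  (* 3 *)
  (~ (D1 g a b `|` D2 g a b `|` D3 g a b) ts ->
   ~ (Dg g ts /\ acc (Dg g `&` [set s | t < s <= b]) ts) ->
     gdifferentiable g a b h t) /\
  (* moreover *)
  (forall l, gderiv_to g a b h t l -> l = - (\1_(Dg g) ts *: f ts)).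
Proof.
move=> h ts; have tts := tstar_ge g_nd g_lc Hb Ht.
have tsab : a <= ts <= b.
  by rewrite (le_trans _ tts) ?(tstar_le g_nd g_lc Hb Ht) //; case/andP: Ht.
have [Dts|nDts] := pselect (Dg g ts).
  have [gderivE diffP] := gderiv_jump f g_nd g_lc ab Ha Hb Ht Dts.
  split; first by move=> [[[_ []]|[_ []]]|[]].
  split => //; split => [_ nacc|l /gderivE ->]; last by rewrite indicE mem_set // scale1r.
  apply/diffP/cvg_within_nacc => [[_ _]|]; first by rewrite ltxx.
  move=> accT; apply: nacc; split => //; apply: sub_acc accT => s [sab Ds tss].
  by split => //=; rewrite (le_lt_trans tts tss); case/andP: sab.
have [gderivE diffP] := gderiv_nojump f g_nd g_lc ab Ha Hb Ht nDts.
split => //; split => [[]//|]; split => [nD123 _|l /gderivE ->]; last first.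
  by rewrite indicE memNset // scale0r oppr0.
apply/diffP/cvg_within_nacc => [[_ _ /eqP //]|accT]; apply: nD123.
by apply: D123_of_acc => //; apply: sub_acc accT => s [sab Ds _ _ side].
Qed.
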